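(* Let $G$ be a graph with a linear order $<$ on $V(G)$ satisfying the X-property, let $s<t$ be vertices with $d^*:=\operatorname{dist}(s,t)<\infty$, and let $P=p_0,p_1,\dots,p_{d^*}$ (with $p_0=s$, $p_{d^*}=t$) be a shortest $s$-$t$ path. Then every $p_i$ with $i<\operatorname{righti}(P)$ satisfies $p_i<t$, and every $p_i$ with $i>\operatorname{lefti}(P)$ satisfies $p_i>s$.
   Context: The X-property: for all vertices $p<q<r<s$, if $\{p,r\}\in E(G)$ and $\{q,s\}\in E(G)$ then $\{p,s\}\in E(G)$. $\operatorname{dist}$ is the number of edges of a shortest path. $\operatorname{lefti}(P)$ is the index $i$ such that $p_i$ is the leftmost (w.r.t. $<$) vertex of $P$, and $\operatorname{righti}(P)$ the index of the rightmost vertex of $P$. *)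

From mathcomp Require Import all_boot all_order.
Set Implicit Arguments. Unset Strict Implicit. Unset Printing Implicit Defensive.
Import Order.TTheory.
Local Open Scope order_scope.

Definition simple_graph (T : Type) (e : rel T) : Prop :=
  irreflexive e /\ symmetric e.

Definition X_property d (T : orderType d) (e : rel T) : Prop :=
  forall p q r s : T, p < q -> q < r -> r < s -> e p r -> e q s -> e p s.

(* A walk from s to t: the vertex sequence s :: p, consecutive vertices
   adjacent, ending at t. Its length (number of edges) is size p. *)
Definition st_walk (T : eqType) (e : rel T) (s t : T) (p : seq T) : Prop :=
  path e s p /\ last s p = t.

Definition shortest_st_path (T : eqType) (e : rel T) (s t : T) (p : seq T)
  : Prop :=
  st_walk e s t p /\ forall q, st_walk e s t q -> size p <= size q.

(* i is lefti(P) for P = s :: p (vertices p_0 = s, ..., p_{size p}):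
   p_i is the leftmost vertex of P. *)
Definition is_lefti d (T : orderType d) (s : T) (p : seq T) (i : nat) : Prop :=
  (i <= size p)%N /\ forall j, (j <= size p)%N -> nth s (s :: p) i <= nth s (s :: p) j.

Definition is_righti d (T : orderType d) (s : T) (p : seq T) (i : nat) : Prop :=
  (i <= size p)%N /\ forall j, (j <= size p)%N -> nth s (s :: p) j <= nth s (s :: p) i.

From mathcomp Require Import all_boot all_order.
From mathcomp Require Import zify.
Set Implicit Arguments. Unset Strict Implicit. Unset Printing Implicit Defensive.
Import Order.TTheory.
Local Open Scope order_scope.

(* If some p_i with i < righti(P) were not left of t, the path would cross the
   level t upwards along an edge p_j p_(j+1) with j < i, while on its way down
   from its rightmost vertex to t it would have to enter the interval
   (p_j, p_(j+1)) along an edge p_k p_(k+1) with k > j + 1.  The X-property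
   turns these two interleaving edges into a chord p_(j+1) p_k or p_j p_k of
   the shortest path, which is impossible.  The statement about lefti(P) is the
   same statement for the reversed path in the reversed order. *)

Lemma crossing (P : pred nat) m n :
  (m <= n)%N -> ~~ P m -> P n -> exists2 k, (m <= k < n)%N & ~~ P k && P k.+1.
Proof.
elim: n => [|n IHn] mn Pm Pn.
  by move: mn; rewrite leqn0 => /eqP m0; rewrite m0 Pn in Pm.
rewrite leq_eqVlt in mn; case/orP: mn => [/eqP mn|mn]; first by rewrite mn Pn in Pm.
have [Pn'|nPn] := boolP (P n); last by exists n; [lia | rewrite nPn].
by have [k mkn Pk] := IHn mn Pm Pn'; exists k; first lia.
Qed.

Lemma st_walk_cat (T : eqType) (e : rel T) (s u t : T) (p q : seq T) :
  st_walk e s u p -> st_walk e u t q -> st_walk e s t (p ++ q).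
Proof.
by move=> [p_path p_last] [q_path q_last]; rewrite /st_walk cat_path last_cat p_last p_path.
Qed.

Lemma last_take_nth (T : Type) (s : T) (p : seq T) k :
  (k <= size p)%N -> last s (take k p) = nth s (s :: p) k.
Proof.
by move=> kp; rewrite (last_nth s) size_takel // -[s :: _]/(take k.+1 (s :: p)) nth_take.
Qed.

Lemma st_walk_take_drop (T : eqType) (e : rel T) (s t : T) (p : seq T) k :
  (k <= size p)%N -> st_walk e s t p ->
  st_walk e s (nth s (s :: p) k) (take k p) /\
  st_walk e (nth s (s :: p) k) t (drop k p).
Proof.
move=> kp [p_path p_last].
rewrite -(cat_take_drop k p) cat_path in p_path.
rewrite -(cat_take_drop k p) last_cat in p_last.
case/andP: p_path; rewrite last_take_nth // in p_last * => pre_path suf_path.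
by do 2!split => //; exact: last_take_nth.
Qed.

(* The consequences of minimality used below; unlike [shortest_st_path] they
   survive reversing the path when [e] is symmetric. *)
Definition geodesic (U : Type) (e : rel U) (g : nat -> U) (n : nat) : Prop :=
  [/\ forall k, (k < n)%N -> e (g k) (g k.+1),
      forall x y, (x <= n)%N -> (y <= n)%N -> g x = g y -> x = y &
      forall x y, (x <= n)%N -> (y <= n)%N -> e (g x) (g y) -> (y <= x.+1)%N].

Section ShortestPath.
Variables (T : eqType) (e : rel T) (s t : T) (p : seq T).
Hypothesis p_shortest : shortest_st_path e s t p.
Local Notation f := (nth s (s :: p)).

Lemma shortest_st_path_nth_dist x y (mid : seq T) :
  (x <= size p)%N -> (y <= size p)%N -> st_walk e (f x) (f y) mid ->
  (y <= x + size mid)%N.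
Proof.
case: p_shortest => walk_p min_p xp yp mid_walk.
have [pre_walk _] := st_walk_take_drop xp walk_p.
have [_ suf_walk] := st_walk_take_drop yp walk_p.
have := min_p _ (st_walk_cat pre_walk (st_walk_cat mid_walk suf_walk)).
rewrite !size_cat size_takel // size_drop; lia.
Qed.

Lemma shortest_st_path_geodesic : geodesic e f (size p).
Proof.
have [[p_path _] _] := p_shortest.
split=> [k kp | x y xp yp fxy | x y xp yp exy].
- exact: (pathP s p_path).
- have le_yx := shortest_st_path_nth_dist (mid := [::]) xp yp (conj isT fxy).
  have le_xy := shortest_st_path_nth_dist (mid := [::]) yp xp (conj isT (esym fxy)).
  by move: le_yx le_xy => /=; lia.
- have := shortest_st_path_nth_dist (mid := [:: f y]) xp yp.
  by rewrite /st_walk /= exy addn1; apply.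
Qed.

End ShortestPath.

Lemma geodesic_rev (U : Type) (e : rel U) (g : nat -> U) (n : nat) :
  symmetric e -> geodesic e g n -> geodesic e (fun k => g (n - k)%N) n.
Proof.
move=> e_sym [g_edge g_inj g_chordless].
split=> [k kn | x y xn yn gxy | x y xn yn exy].
- have -> : (n - k = (n - k.+1).+1)%N by lia.
  by rewrite e_sym g_edge //; lia.
- by have := g_inj _ _ (leq_subr x n) (leq_subr y n) gxy; lia.
- by rewrite e_sym in exy; have := g_chordless _ _ (leq_subr y n) (leq_subr x n) exy; lia.
Qed.

Lemma X_property_dual disp (T : orderType disp) (e : rel T) :
  symmetric e -> X_property e -> X_property (e : rel T^d).
Proof.
move=> e_sym eX a b c d ab bc cd eac ebd.
by rewrite e_sym; apply: (eX d c b a) => //; rewrite e_sym.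
Qed.

Section Geodesic.
Variables (disp : Order.disp_t) (T : orderType disp) (e : rel T).
Hypotheses (e_sym : symmetric e) (eX : X_property e).
Variables (g : nat -> T) (n : nat).
Hypothesis g_geodesic : geodesic e g n.

Lemma geodesic_neq x y : (x < y)%N -> (y <= n)%N -> g x != g y.
Proof.
have [_ g_inj _] := g_geodesic; move=> xy yn; have xn := ltnW (leq_trans xy yn).
by apply/eqP => /(g_inj _ _ xn yn) eq_xy; rewrite eq_xy ltnn in xy.
Qed.

Lemma geodesic_up_crossing i :
  g 0 < g n -> (i < n)%N -> g n < g i ->
  exists2 j, (j < i)%N & g j < g n < g j.+1.
Proof.
move=> lt_0n i_lt_n lt_ni.
have [j /andP[_ ji] /andP[le_jn lt_nj1]] :
    exists2 j, (0 <= j < i)%N & ~~ (g n < g j) && (g n < g j.+1).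
  by apply: (@crossing (fun x => g n < g x)) lt_ni; rewrite // -leNgt ltW.
rewrite -leNgt in le_jn.
exists j => //; rewrite lt_nj1 andbT lt_neqAle le_jn andbT.
exact: geodesic_neq (ltn_trans ji i_lt_n) _.
Qed.

Lemma geodesic_lt_last_before_max r i :
  g 0 < g n -> (r <= n)%N -> (forall j, (j <= n)%N -> g j <= g r) ->
  (i < r)%N -> g i < g n.
Proof.
have [g_edge _ g_chordless] := g_geodesic.
move=> lt_0n rn r_max ir; rewrite ltNge; apply/negP => le_ni.
have i_lt_n : (i < n)%N := leq_trans ir rn.
have lt_ni : g n < g i by rewrite lt_neqAle eq_sym le_ni geodesic_neq.
have [j ji /andP[lt_jn lt_nj1]] := geodesic_up_crossing lt_0n i_lt_n lt_ni.
have j_lt_n : (j < n)%N := ltn_trans ji i_lt_n.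
have j1_lt_r : (j.+1 < r)%N := leq_ltn_trans ji ir.
have lt_j1r : g j.+1 < g r by rewrite lt_neqAle r_max ?geodesic_neq ?(ltnW j1_lt_r).
pose inside x := (g j < g x) && (g x < g j.+1).
have [k /andP[rk kn] /andP[out_k /andP[lt_jk1 lt_k1j1]]] :
    exists2 k, (r <= k < n)%N & ~~ inside k && inside k.+1.
  apply: crossing rn _ _; last by rewrite /inside lt_jn lt_nj1.
  by rewrite /inside negb_and -!leNgt (ltW lt_j1r) orbT.
have j1_lt_k : (j.+1 < k)%N := leq_trans j1_lt_r rk.
have e_j := g_edge j j_lt_n.
have e_k := g_edge k kn.
case: (ltgtP (g k) (g j)) => [lt_kj | lt_jk | eq_kj].
- have r_lt_k : (r < k)%N.
    rewrite ltn_neqAle rk andbT; apply: contraTneq lt_kj => <-.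
    by rewrite -leNgt (le_trans (ltW lt_jn)) ?r_max.
  have e_j1k : e (g j.+1) (g k) by rewrite e_sym; exact: eX lt_kj lt_jk1 lt_k1j1 e_k e_j.
  have := g_chordless _ _ j_lt_n (ltnW kn) e_j1k.
  by rewrite leqNgt (leq_ltn_trans j1_lt_r r_lt_k).
- have lt_j1k : g j.+1 < g k.
    rewrite /inside lt_jk /= -leNgt in out_k.
    by rewrite lt_neqAle out_k geodesic_neq ?(ltnW kn).
  have e_jk : e (g j) (g k) by apply: (eX lt_jk1 lt_k1j1 lt_j1k e_j); rewrite e_sym.
  have := g_chordless _ _ (ltnW j_lt_n) (ltnW kn) e_jk.
  by rewrite leqNgt j1_lt_k.
- by move: (geodesic_neq (ltnW j1_lt_k) (ltnW kn)); rewrite eq_kj eqxx.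
Qed.

End Geodesic.

Theorem corollary9 (d : Order.disp_t) (T : orderType d) (e : rel T)
  (s t : T) (p : seq T) :
  simple_graph e -> X_property e -> s < t ->
  shortest_st_path e s t p ->
  (forall r i, is_righti s p r -> (i < r)%N -> nth s (s :: p) i < t) /\
  (forall l i, is_lefti s p l -> (l < i)%N -> (i <= size p)%N ->
     s < nth s (s :: p) i).
Proof.
move=> [_ e_sym] eX lt_st p_shortest.
have geo := shortest_st_path_geodesic p_shortest.
have p_last : nth s (s :: p) (size p) = t.
  by case: p_shortest => -[_ <-] _; rewrite (last_nth s).
split=> [r i [rp r_max] ir | l i [lp l_min] li ip].
  rewrite -p_last; apply: (geodesic_lt_last_before_max e_sym eX geo _ rp r_max ir).
  by rewrite p_last.
have := @geodesic_lt_last_before_max _ T^d e e_sym (X_property_dual e_sym eX)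
  _ _ (geodesic_rev e_sym geo) (size p - l) (size p - i).
rewrite !subKn // subn0 subnn p_last; apply=> //.
- exact: leq_subr.
- by move=> j _; apply: l_min; rewrite leq_subr.
- exact: ltn_sub2l (leq_trans li ip) li.
Qed.
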